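(* Assume $r>\mu$. (a) If $C-rK_O\le0$ and $C+rK_I>0$, and $p_I:=e^{-\mu\delta}\frac{\lambda_2}{\lambda_2-1}(r-\mu)\left(\frac{C}{r}+K_I\right)$, then $p_I>e^{-\mu\delta}(C+rK_I)$. (b) If $C-rK_O>0$, $C+rK_I>0$, $K_I+K_O\ge0$, and $p_I$ is the largest solution of $A(\lambda_2-\lambda_1)p^{\lambda_1}+\frac{e^{(\mu-r)\delta}}{r-\mu}(\lambda_2-1)p-\lambda_2e^{-r\delta}\left(\frac{C}{r}+K_I\right)=0$, then $p_I>e^{-\mu\delta}(C+rK_I)$. (c) If $C-rK_O>0$, $C+rK_I>0$, $K_I+K_O<0$ and $p_O<e^{-\mu\delta}(C+rK_I)$, and $p_I^{(1)}<p_I^{(2)}$ are the entry thresholds for which $\tau_I^*:=\inf\{t>0:P(t)\le p_I^{(1)}\text{ or }P(t)\ge p_I^{(2)}\}$ maximizes the problem defining $H$ (equivalently, $(p_I^{(1)},p_I^{(2)})$ is the solution with $p_I^{(1)}<p_I^{(2)}$ of the smooth-fit system: there are constants $B_1,B_2$ with $B_1x^{\lambda_1}+B_2x^{\lambda_2}=-e^{-r\delta}(K_I+K_O)$ and $\lambda_1B_1x^{\lambda_1-1}+\lambda_2B_2x^{\lambda_2-1}=0$ at $x=p_I^{(1)}$, and $B_1y^{\lambda_1}+B_2y^{\lambda_2}=Ay^{\lambda_1}+\frac{e^{(\mu-r)\delta}}{r-\mu}y-e^{-r\delta}(\frac{C}{r}+K_I)$ and $\lambda_1B_1y^{\lambda_1-1}+\lambda_2B_2y^{\lambda_2-1}=\lambda_1Ay^{\lambda_1-1}+\frac{e^{(\mu-r)\delta}}{r-\mu}$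 at $y=p_I^{(2)}$, with $p_I^{(1)}\le p_O$), then $p_I^{(1)}<e^{-\mu\delta}(C-rK_O)$ and $p_I^{(2)}>e^{-\mu\delta}(C+rK_I)$.
   Context: Price $P$: $\mathrm{d}P=\mu P\,\mathrm{d}t+\sigma P\,\mathrm{d}B$, $P(0)=p>0$, with $B$ a standard Brownian motion, $\mu\in\mathbb{R}$, $\sigma>0$; $\mathbb{E}^p$ is expectation given $P(0)=p$; stopping times valued in $[0,+\infty]$ with $e^{-r\tau}(\cdots)=0$ on $\{\tau=\infty\}$. Constants $r>0$, $C,K_I,K_O\in\mathbb{R}$, $\delta\ge0$. $\lambda_1<\lambda_2$ are the roots of $r-\mu\lambda-\frac12\sigma^2\lambda(\lambda-1)=0$. $k_1:=\frac{e^{(\mu-r)\delta}-1}{\mu-r}$, $k_0:=\frac{C}{r}(e^{-r\delta}-1)+e^{-r\delta}K_I$, $l_1:=-k_1$, $l_0:=-\frac{C}{r}(e^{-r\delta}-1)+e^{-r\delta}K_O$. $G(p):=\sup_{\tau_O}\mathbb{E}^p[\int_0^{\tau_O}e^{-rt}(P(t)-C)\mathrm{d}t-e^{-r\tau_O}(l_1P(\tau_O)+l_0)]$ and $H(p):=\sup_{\tau_I}\mathbb{E}^p[e^{-r\tau_I}(G(P(\tau_I))-k_1P(\tau_I)-k_0)]$. When $C>rK_O$: $p_O:=e^{-\mu\delta}\frac{\lambda_1}{\lambda_1-1}(r-\mu)(\frac{C}{r}-K_O)$, $A:=e^{(\mu-r)\delta}p_O^{1-\lambda_1}/(\lambda_1(\mu-r))$.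 *)

From Stdlib Require Import Reals.
Open Scope R_scope.

(* lambda1 < lambda2: the two roots of  r - mu*l - (1/2) sigma^2 l (l-1) = 0,
   i.e. of (1/2) sigma^2 l^2 - ((1/2) sigma^2 - mu) l - r = 0  (sigma > 0). *)
Definition lam1 (mu sigma r : R) : R :=
  ((sigma^2/2 - mu) - sqrt ((sigma^2/2 - mu)^2 + 2 * sigma^2 * r)) / sigma^2.
Definition lam2 (mu sigma r : R) : R :=
  ((sigma^2/2 - mu) + sqrt ((sigma^2/2 - mu)^2 + 2 * sigma^2 * r)) / sigma^2.

Definition pO (mu sigma r delta C KO : R) : R :=
  exp (- mu * delta) * (lam1 mu sigma r / (lam1 mu sigma r - 1))
    * (r - mu) * (C / r - KO).

Definition Acoef (mu sigma r delta C KO : R) : R :=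
  exp ((mu - r) * delta) * Rpower (pO mu sigma r delta C KO) (1 - lam1 mu sigma r)
    / (lam1 mu sigma r * (mu - r)).

From Stdlib Require Import Reals Lra Psatz Ranalysis5.
From Coquelicot Require Import Coquelicot.
Open Scope R_scope.

(* With s = sigma^2/2 the roots satisfy r = - s l1 l2 and mu = s (1 - l1 - l2), with
   l1 < 0 < 1 < l2, so that r - mu = s (1 - l1) (l2 - 1) and every threshold is an explicit
   multiple of e^{-mu delta} a or e^{-mu delta} b, where a = C/r + K_I and b = C/r - K_O.
   Part (a) then reduces to l2 (1 - l1) > - l1 l2.
   In (b) the function is negative at q = e^{-mu delta} r a, since q / p_O >= l2 / (l2 - 1)
   makes (q / p_O)^l1 small, and it grows at least linearly, so it has a root beyond q.
   In (c) the smooth fit at p_I^(1) gives B1 x^l1 + B2 x^l2 >= e^{-r delta} (- K_I - K_O) for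
   all x > 0, and the exit payoff takes exactly this value at x = p_O.  Rewritten through the
   smooth fit at p_I^(2), the difference of the two at p_O is a combination of exponentials
   which strict convexity of exp makes negative as soon as p_I^(2) <= q. *)

Lemma lam_vieta (mu sigma r : R) : 0 < sigma -> 0 <= r ->
  r = - (sigma ^ 2 / 2) * lam1 mu sigma r * lam2 mu sigma r /\
  mu = sigma ^ 2 / 2 * (1 - lam1 mu sigma r - lam2 mu sigma r).
Proof.
intros hsigma hr; unfold lam1, lam2.
assert (hs2 : 0 < sigma ^ 2) by (apply pow_lt; lra).
set (m := sigma ^ 2 / 2 - mu).
assert (hD : 0 <= m ^ 2 + 2 * sigma ^ 2 * r) by nra.
pose proof (sqrt_sqrt _ hD) as hsq.
set (S := sqrt _) in *.
split; [|unfold m; field; lra].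
replace (- (sigma ^ 2 / 2) * ((m - S) / sigma ^ 2) * ((m + S) / sigma ^ 2))
  with ((S * S - m ^ 2) / (2 * sigma ^ 2)) by (field; lra).
rewrite hsq; unfold m; field; lra.
Qed.

Lemma lam1_le_lam2 (mu sigma r : R) : 0 < sigma -> lam1 mu sigma r <= lam2 mu sigma r.
Proof.
intro hsigma; unfold lam1, lam2.
assert (hs2 : 0 < sigma ^ 2) by (apply pow_lt; lra).
pose proof (sqrt_pos ((sigma ^ 2 / 2 - mu) ^ 2 + 2 * sigma ^ 2 * r)).
apply Rmult_le_compat_r; [apply Rlt_le, Rinv_0_lt_compat; lra | lra].
Qed.

Lemma vieta_root_bounds (s l1 l2 r mu : R) : 0 < s -> 0 < r -> mu < r ->
  r = - s * l1 * l2 -> mu = s * (1 - l1 - l2) -> l1 <= l2 -> l1 < 0 /\ 1 < l2.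
Proof.
intros hs hr hmu Er Emu hle.
assert (hprod : l1 * l2 = - (r / s)) by (rewrite Er; field; lra).
assert (0 < r / s) by (apply Rdiv_lt_0_compat; lra).
assert (hl1 : l1 < 0) by nra.
split; [exact hl1|].
assert (hl2 : l2 - 1 = (r - mu) / (s * (1 - l1))) by (rewrite Er, Emu; field; lra).
assert (0 < (r - mu) / (s * (1 - l1))) by (apply Rdiv_lt_0_compat; [|apply Rmult_lt_0_compat]; lra).
lra.
Qed.

Lemma exp_pair_ge (l1 l2 c X Y u : R) : l1 < 0 -> 0 < l2 -> 0 <= c ->
  X + Y = c -> l1 * X + l2 * Y = 0 -> c <= X * exp (l1 * u) + Y * exp (l2 * u).
Proof.
intros hl1 hl2 hc hsum hder.
assert (hX : (l2 - l1) * X = l2 * c).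
{ transitivity (l2 * (X + Y) - (l1 * X + l2 * Y)); [ring|]. rewrite hsum, hder. ring. }
assert (hY : (l2 - l1) * Y = - l1 * c).
{ transitivity ((l1 * X + l2 * Y) - l1 * (X + Y)); [ring|]. rewrite hsum, hder. ring. }
assert (htangent : l2 - l1 <= l2 * exp (l1 * u) - l1 * exp (l2 * u)).
{ pose proof (exp_ineq1_le (l1 * u)); pose proof (exp_ineq1_le (l2 * u)).
  assert (l2 * (1 + l1 * u) <= l2 * exp (l1 * u)) by (apply Rmult_le_compat_l; lra).
  assert (- l1 * (1 + l2 * u) <= - l1 * exp (l2 * u)) by (apply Rmult_le_compat_l; lra).
  lra. }
apply (Rmult_le_reg_l (l2 - l1)); [lra|].
transitivity (c * (l2 * exp (l1 * u) - l1 * exp (l2 * u))).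
- rewrite Rmult_comm. apply Rmult_le_compat_l; lra.
- right. transitivity (((l2 - l1) * X) * exp (l1 * u) + ((l2 - l1) * Y) * exp (l2 * u)).
  + rewrite hX, hY. ring.
  + ring.
Qed.

Lemma exp_strict_convex (l1 l2 x : R) : l1 < 1 -> 1 < l2 -> x <> 0 ->
  (l2 - l1) * exp x < (l2 - 1) * exp (l1 * x) + (1 - l1) * exp (l2 * x).
Proof.
intros hl1 hl2 hx.
assert (hsplit : forall l, exp (l * x) = exp x * exp ((l - 1) * x))
  by (intro l; rewrite <- exp_plus; f_equal; ring).
rewrite (hsplit l1), (hsplit l2).
assert (e1 : 1 + (l1 - 1) * x < exp ((l1 - 1) * x)).
{ apply exp_ineq1. intro h. apply Rmult_integral in h. lra. }
pose proof (exp_ineq1_le ((l2 - 1) * x)).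
pose proof (exp_pos x).
assert (0 < (l2 - 1) * exp x * (exp ((l1 - 1) * x) - (1 + (l1 - 1) * x)))
  by (apply Rmult_lt_0_compat; [apply Rmult_lt_0_compat|]; lra).
assert (0 <= (1 - l1) * exp x * (exp ((l2 - 1) * x) - (1 + (l2 - 1) * x)))
  by (apply Rmult_le_pos; [apply Rmult_le_pos|]; lra).
assert ((l2 - 1) * (exp x * exp ((l1 - 1) * x)) + (1 - l1) * (exp x * exp ((l2 - 1) * x))
  - (l2 - l1) * exp x
  = (l2 - 1) * exp x * (exp ((l1 - 1) * x) - (1 + (l1 - 1) * x))
  + (1 - l1) * exp x * (exp ((l2 - 1) * x) - (1 + (l2 - 1) * x))) by ring.
lra.
Qed.

(* Vanishes at 0, and its derivative is - l1 l2 times the convexity gap of exp_strict_convex. *)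
Lemma exp_gap_neg (l1 l2 u : R) : l1 < 0 -> 1 < l2 -> u < 0 ->
  - l2 * (l2 - 1) * exp (l1 * u) - l1 * (1 - l1) * exp (l2 * u)
  + l1 * l2 * (l2 - l1) * exp u + (1 - l1) * (l2 - 1) * (l2 - l1) < 0.
Proof.
intros hl1 hl2 hu.
set (T := fun v => - l2 * (l2 - 1) * exp (l1 * v) - l1 * (1 - l1) * exp (l2 * v)
  + l1 * l2 * (l2 - l1) * exp v + (1 - l1) * (l2 - 1) * (l2 - l1)).
set (T' := fun v => - l1 * l2 *
  ((l2 - 1) * exp (l1 * v) + (1 - l1) * exp (l2 * v) - (l2 - l1) * exp v)).
destruct (MVT_cor2 T T' u 0 hu) as [c [hmvt hc]].
{ intros c _. apply is_derive_Reals. unfold T, T'. auto_derive; [auto | ring]. }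
assert (hT0 : T 0 = 0) by (unfold T; rewrite !Rmult_0_r, exp_0; ring).
pose proof (exp_strict_convex l1 l2 c ltac:(lra) hl2 ltac:(lra)).
assert (0 < T' c * (0 - u)).
{ unfold T'. apply Rmult_lt_0_compat; [|lra].
  apply Rmult_lt_0_compat; [nra | lra]. }
change (T u < 0). lra.
Qed.

(* For x = exp u < 1 the left side is h(x) = V1 x^l1 + V2 x^l2 - w x + c, where the two
   linear hypotheses say h(1) = h'(1) = 0. *)
Lemma smooth_fit_gap_neg (l1 l2 u w c V1 V2 : R) : l1 < 0 -> 1 < l2 -> u < 0 ->
  0 < c -> 0 <= w -> (1 - l1) * (l2 - 1) * w <= - l1 * l2 * c ->
  V1 + V2 = w - c -> l1 * V1 + l2 * V2 = w ->
  V1 * exp (l1 * u) + V2 * exp (l2 * u) - w * exp u + c < 0.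
Proof.
intros hl1 hl2 hu hc hw hwc hval hder.
set (P := (l2 - 1) * exp (l1 * u) + (1 - l1) * exp (l2 * u) - (l2 - l1) * exp u).
set (Q := (l2 - l1) - l2 * exp (l1 * u) + l1 * exp (l2 * u)).
assert (hP : 0 < P) by (pose proof (exp_strict_convex l1 l2 u ltac:(lra) hl2 ltac:(lra)); unfold P; lra).
assert (hT : - l1 * l2 * P + (1 - l1) * (l2 - 1) * Q < 0).
{ pose proof (exp_gap_neg l1 l2 u hl1 hl2 hu) as hneg.
  assert (- l1 * l2 * P + (1 - l1) * (l2 - 1) * Q
    = - l2 * (l2 - 1) * exp (l1 * u) - l1 * (1 - l1) * exp (l2 * u)
      + l1 * l2 * (l2 - l1) * exp u + (1 - l1) * (l2 - 1) * (l2 - l1)) by (unfold P, Q; ring).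
  lra. }
assert (hgap : (l2 - l1) * (V1 * exp (l1 * u) + V2 * exp (l2 * u) - w * exp u + c) = w * P + c * Q).
{ assert (hV1 : (l2 - l1) * V1 = (l2 - 1) * w - l2 * c).
  { transitivity (l2 * (V1 + V2) - (l1 * V1 + l2 * V2)); [ring|]. rewrite hval, hder. ring. }
  assert (hV2 : (l2 - l1) * V2 = (1 - l1) * w + l1 * c).
  { transitivity ((l1 * V1 + l2 * V2) - l1 * (V1 + V2)); [ring|]. rewrite hval, hder. ring. }
  transitivity (((l2 - l1) * V1) * exp (l1 * u) + ((l2 - l1) * V2) * exp (l2 * u)
    + (l2 - l1) * (c - w * exp u)); [ring|].
  rewrite hV1, hV2. unfold P, Q. ring. }
assert (hwP : (1 - l1) * (l2 - 1) * w * P <= - l1 * l2 * c * P)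
  by (apply Rmult_le_compat_r; lra).
apply (Rmult_lt_reg_l (l2 - l1)); [lra|]. rewrite Rmult_0_r, hgap.
apply (Rmult_lt_reg_l ((1 - l1) * (l2 - 1))); [apply Rmult_lt_0_compat; lra|].
rewrite Rmult_0_r.
assert (0 < c * (- (- l1 * l2 * P + (1 - l1) * (l2 - 1) * Q))) by (apply Rmult_lt_0_compat; lra).
lra.
Qed.

Lemma Rpower_pred_mul (p l : R) : 0 < p -> Rpower p (l - 1) * p = Rpower p l.
Proof.
intro hp. rewrite <- (Rpower_1 p hp) at 2. rewrite <- Rpower_plus. f_equal. ring.
Qed.

Lemma Rpower_rebase (x p l : R) : Rpower x l = Rpower p l * exp (l * (ln x - ln p)).
Proof. unfold Rpower. rewrite <- exp_plus. f_equal. ring. Qed.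

Lemma Rpower_derivative_scale (l1 l2 B1 B2 p : R) : 0 < p ->
  p * (l1 * B1 * Rpower p (l1 - 1) + l2 * B2 * Rpower p (l2 - 1))
  = l1 * (B1 * Rpower p l1) + l2 * (B2 * Rpower p l2).
Proof.
intro hp. rewrite <- (Rpower_pred_mul p l1 hp), <- (Rpower_pred_mul p l2 hp). ring.
Qed.

Lemma smooth_fit_lower_bound (l1 l2 B1 B2 p c x : R) : l1 < 0 -> 0 < l2 -> 0 < p -> 0 <= c ->
  B1 * Rpower p l1 + B2 * Rpower p l2 = c ->
  l1 * B1 * Rpower p (l1 - 1) + l2 * B2 * Rpower p (l2 - 1) = 0 ->
  c <= B1 * Rpower x l1 + B2 * Rpower x l2.
Proof.
intros hl1 hl2 hp hc hval hder.
rewrite (Rpower_rebase x p l1), (Rpower_rebase x p l2), <- !Rmult_assoc.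
apply (exp_pair_ge l1 l2); [lra | lra | lra | exact hval |].
rewrite <- Rpower_derivative_scale by exact hp. rewrite hder. ring.
Qed.

Lemma exists_root_above (alpha l beta gamma q : R) : 0 <= alpha -> 0 < beta -> 0 < q ->
  alpha * Rpower q l + beta * q - gamma < 0 ->
  exists z, q < z /\ alpha * Rpower z l + beta * z - gamma = 0.
Proof.
intros halpha hbeta hq hneg.
set (g := fun p => alpha * Rpower p l + beta * p - gamma).
set (y := q + 1 + Rmax 0 (gamma / beta)).
assert (hy : q + 1 <= y) by (unfold y; pose proof (Rmax_l 0 (gamma / beta)); lra).
assert (hgy : 0 < g y).
{ unfold g.
  assert (gamma <= beta * Rmax 0 (gamma / beta)).
  { replace gamma with (beta * (gamma / beta)) at 1 by (field; lra).
    apply Rmult_le_compat_l; [lra | apply Rmax_r]. }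
  assert (0 <= alpha * Rpower y l) by (apply Rmult_le_pos; [lra | apply Rlt_le, exp_pos]).
  assert (beta * y = beta * (q + 1) + beta * Rmax 0 (gamma / beta)) by (unfold y; ring).
  assert (0 < beta * (q + 1)) by (apply Rmult_lt_0_compat; lra).
  lra. }
destruct (IVT_interv g q y) as [z [hz hgz]]; [| lra | exact hneg | exact hgy |].
- intros x hx. apply derivable_continuous_pt.
  exists (alpha * (l * Rpower x (l - 1)) + beta * 1 - 0).
  apply derivable_pt_lim_minus; [apply derivable_pt_lim_plus | apply derivable_pt_lim_const].
  + apply derivable_pt_lim_scal, derivable_pt_lim_power. lra.
  + apply derivable_pt_lim_scal, derivable_pt_lim_id.
- exists z. split; [|exact hgz].
  destruct hz as [hz _]. destruct (Rle_lt_or_eq_dec q z hz) as [h | h]; [exact h|].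
  subst z. unfold g in hgz. lra.
Qed.

Lemma Rpower_neg_exponent_bound (l1 l2 rho : R) : l1 < 0 -> 1 < l2 -> l2 / (l2 - 1) <= rho ->
  (l2 - l1) * Rpower rho l1 < l2.
Proof.
intros hl1 hl2 hrho.
assert (hrho0 : 0 < rho) by (assert (0 < l2 / (l2 - 1)) by (apply Rdiv_lt_0_compat; lra); lra).
assert (hinv : exp (- ln rho) <= 1 - 1 / l2).
{ rewrite exp_Ropp, exp_ln by exact hrho0.
  replace (1 - 1 / l2) with (/ (l2 / (l2 - 1))) by (field; lra).
  apply Rinv_le_contravar; [apply Rdiv_lt_0_compat|]; lra. }
assert (hln : 1 / l2 < ln rho).
{ assert (ln rho <> 0).
  { intro h. rewrite h, Ropp_0, exp_0 in hinv.
    assert (0 < 1 / l2) by (apply Rdiv_lt_0_compat; lra). lra. }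
  pose proof (exp_ineq1 (- ln rho) ltac:(lra)). lra. }
assert (hexp : Rpower rho l1 < exp (l1 / l2)).
{ apply exp_increasing. replace (l1 / l2) with (l1 * (1 / l2)) by (field; lra). nra. }
assert (hbern : exp (l1 / l2) * (1 - l1 / l2) <= 1).
{ pose proof (exp_ineq1_le (- (l1 / l2))).
  assert (exp (l1 / l2) * exp (- (l1 / l2)) = 1) by (rewrite <- exp_plus, Rplus_opp_r; apply exp_0).
  pose proof (exp_pos (l1 / l2)). nra. }
replace (l2 - l1) with (l2 * (1 - l1 / l2)) by (field; lra).
assert (0 < 1 - l1 / l2) by (assert (l1 / l2 < 0) by (apply Rdiv_neg_pos; lra); lra).
assert (hlt : (1 - l1 / l2) * Rpower rho l1 < 1).
{ assert ((1 - l1 / l2) * Rpower rho l1 < (1 - l1 / l2) * exp (l1 / l2))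
    by (apply Rmult_lt_compat_l; lra).
  lra. }
rewrite Rmult_assoc.
apply (Rmult_lt_compat_l l2) in hlt; lra.
Qed.

Section Roots.

Variables s l1 l2 r mu : R.
Hypotheses (hs : 0 < s) (hl1 : l1 < 0) (hl2 : 1 < l2)
  (hr : r = - s * l1 * l2) (hmu : mu = s * (1 - l1 - l2)).

Lemma r_sub_mu : r - mu = s * (1 - l1) * (l2 - 1).
Proof. rewrite hr, hmu. ring. Qed.

Lemma r_sub_mu_pos : 0 < r - mu.
Proof. rewrite r_sub_mu. apply Rmult_lt_0_compat; [apply Rmult_lt_0_compat|]; lra. Qed.

Lemma entry_threshold_gt (em a : R) : 0 < em -> 0 < a ->
  em * (l2 / (l2 - 1)) * (r - mu) * a > em * (r * a).
Proof.
intros hem ha.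
replace (em * (l2 / (l2 - 1)) * (r - mu) * a) with (em * a * (r + s * l2))
  by (rewrite r_sub_mu, hr; field; lra).
replace (em * (r * a)) with (em * a * r) by ring.
apply Rmult_lt_compat_l; [apply Rmult_lt_0_compat; lra |].
assert (0 < s * l2) by (apply Rmult_lt_0_compat; lra). lra.
Qed.

Lemma r_pos : 0 < r.
Proof.
rewrite hr. replace (- s * l1 * l2) with (s * (- l1) * l2) by ring.
apply Rmult_lt_0_compat; [apply Rmult_lt_0_compat|]; lra.
Qed.

Section Thresholds.

(* em = e^{-mu delta}, E = e^{(mu - r) delta}, er = e^{-r delta}, b = C/r - K_O, and K is the
   slope of the exit payoff. *)
Variables em E er b pO A : R.
Hypotheses (hem : 0 < em) (hE : 0 < E) (her : er = E * em) (hb : 0 < b)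
  (hpO : pO = em * (l1 / (l1 - 1)) * (r - mu) * b)
  (hA : A = E * Rpower pO (1 - l1) / (l1 * (mu - r))).

Let K := E / (r - mu).

Lemma pO_pos_lt : 0 < pO < em * (r * b).
Proof.
assert (hpO' : pO = em * b * (- l1 * s * (l2 - 1))) by (rewrite hpO, r_sub_mu; field; lra).
assert (hem_b : 0 < em * b) by (apply Rmult_lt_0_compat; lra).
assert (hfac : 0 < - l1 * s * (l2 - 1)) by (apply Rmult_lt_0_compat; [nra | lra]).
rewrite hpO'. split; [apply Rmult_lt_0_compat; lra|].
replace (em * (r * b)) with (em * b * r) by ring.
apply Rmult_lt_compat_l; [exact hem_b|]. rewrite hr. nra.
Qed.

Lemma K_pos : 0 < K.
Proof. apply Rdiv_lt_0_compat; [exact hE | exact r_sub_mu_pos]. Qed.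

Lemma K_pO : (1 - l1) * K * pO = - l1 * er * b.
Proof. unfold K. rewrite hpO, her. field. split; [lra | apply Rgt_not_eq, r_sub_mu_pos]. Qed.

Lemma K_threshold (a : R) : (1 - l1) * (l2 - 1) * K * (em * (r * a)) = - l1 * l2 * er * a.
Proof.
unfold K. rewrite her. replace (r - mu) with (s * (1 - l1) * (l2 - 1)) by (symmetry; exact r_sub_mu).
rewrite hr. field. repeat split; lra.
Qed.

Lemma A_Rpower_pO : (1 - l1) * (A * Rpower pO l1) = er * b.
Proof.
pose proof r_sub_mu_pos as hrm.
assert (hApO : A * Rpower pO l1 = E * pO / (l1 * (mu - r))).
{ assert (hpow : Rpower pO (1 - l1) * Rpower pO l1 = pO).
  { rewrite <- Rpower_plus. replace (1 - l1 + l1) with 1 by ring.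
    exact (Rpower_1 pO (proj1 pO_pos_lt)). }
  rewrite hA. rewrite <- hpow at 3. field. split; lra. }
rewrite hApO, her, hpO. field. split; lra.
Qed.

Lemma exit_value_pO : A * Rpower pO l1 + K * pO = er * b.
Proof.
apply (Rmult_eq_reg_l (1 - l1)); [|lra].
transitivity ((1 - l1) * (A * Rpower pO l1) + (1 - l1) * K * pO); [ring|].
rewrite A_Rpower_pO, K_pO. ring.
Qed.

Lemma entry_root_above (a : R) : 0 < a -> b <= a ->
  exists z, em * (r * a) < z /\ A * (l2 - l1) * Rpower z l1 + K * (l2 - 1) * z - l2 * er * a = 0.
Proof.
intros ha hba.
destruct pO_pos_lt as [hpO0 _].
pose proof K_pos as hK.
assert (her0 : 0 < er) by (rewrite her; apply Rmult_lt_0_compat; lra).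
set (q := em * (r * a)).
pose proof r_pos as hr0.
assert (hq : 0 < q) by (apply Rmult_lt_0_compat; [|apply Rmult_lt_0_compat]; lra).
assert (hA0 : 0 < A).
{ assert (hpow : 0 < Rpower pO l1) by apply exp_pos.
  replace A with (er * b / ((1 - l1) * Rpower pO l1))
    by (rewrite <- A_Rpower_pO; field; split; lra).
  apply Rdiv_lt_0_compat; apply Rmult_lt_0_compat; lra. }
apply exists_root_above; [nra | nra | exact hq |].
set (rho := q / pO).
assert (hrho : l2 / (l2 - 1) <= rho).
{ assert (hratio : l2 * a * pO = b * (l2 - 1) * q).
  { apply (Rmult_eq_reg_l ((1 - l1) * K)); [|nra].
    transitivity (l2 * a * ((1 - l1) * K * pO)); [ring|].
    transitivity (b * ((1 - l1) * (l2 - 1) * K * q)); [|ring].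
    unfold q. rewrite K_pO, K_threshold. ring. }
  assert (hq' : q = l2 * a * pO / (b * (l2 - 1))) by (rewrite hratio; field; lra).
  replace rho with (l2 / (l2 - 1) * (a / b)) by (unfold rho; rewrite hq'; field; lra).
  rewrite <- (Rmult_1_r (l2 / (l2 - 1))) at 1.
  apply Rmult_le_compat_l; [apply Rlt_le, Rdiv_lt_0_compat; lra |].
  apply Rle_div_r; lra. }
assert (hsplit : Rpower q l1 = Rpower pO l1 * Rpower rho l1).
{ rewrite Rpower_mult_distr by (unfold rho; try apply Rdiv_lt_0_compat; lra).
  unfold rho. f_equal. field. lra. }
assert (hval : (1 - l1) * (A * (l2 - l1) * Rpower q l1 + K * (l2 - 1) * q - l2 * er * a)
  = er * (b * ((l2 - l1) * Rpower rho l1) - l2 * a)).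
{ rewrite hsplit.
  transitivity ((l2 - l1) * Rpower rho l1 * ((1 - l1) * (A * Rpower pO l1))
    + (1 - l1) * (l2 - 1) * K * q - (1 - l1) * l2 * er * a); [ring|].
  unfold q. rewrite A_Rpower_pO, K_threshold. ring. }
assert (hbound := Rpower_neg_exponent_bound l1 l2 rho hl1 hl2 hrho).
assert (b * ((l2 - l1) * Rpower rho l1) - l2 * a < 0) by nra.
assert (er * (b * ((l2 - l1) * Rpower rho l1) - l2 * a) < 0) by nra.
nra.
Qed.

Lemma pO_lt_exit_threshold (a k p1 p2 B1 B2 V1 : R) :
  0 < k -> b = a + k -> 0 < p1 -> p1 < p2 ->
  B1 * Rpower p1 l1 + B2 * Rpower p1 l2 = er * k ->
  l1 * B1 * Rpower p1 (l1 - 1) + l2 * B2 * Rpower p1 (l2 - 1) = 0 ->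
  V1 + B2 * Rpower p2 l2 = K * p2 - er * a ->
  l1 * V1 + l2 * (B2 * Rpower p2 l2) = K * p2 ->
  pO < p2.
Proof.
intros hk hbk hp1 hp12 hval1 hder1 hV hdV.
pose proof K_pos as hK.
assert (her0 : 0 < er) by (rewrite her; apply Rmult_lt_0_compat; lra).
set (Y := B2 * Rpower p1 l2).
set (V2 := B2 * Rpower p2 l2) in hV, hdV.
assert (hY : (l2 - l1) * Y = - l1 * er * k).
{ assert (hdY : l1 * (B1 * Rpower p1 l1) + l2 * Y = 0)
    by (unfold Y; rewrite <- Rpower_derivative_scale by exact hp1; rewrite hder1; ring).
  transitivity ((l1 * (B1 * Rpower p1 l1) + l2 * Y) - l1 * (B1 * Rpower p1 l1 + Y)); [ring|].
  rewrite hdY. unfold Y. rewrite hval1. ring. }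
assert (hY0 : 0 < Y).
{ assert (0 < - l1 * er * k) by (apply Rmult_lt_0_compat; [|lra]; nra). nra. }
(* B2 > 0, so the x^l2 part of the continuation value increases from p1 to p2. *)
assert (hYV2 : Y < V2).
{ unfold V2. rewrite (Rpower_rebase p2 p1 l2), <- Rmult_assoc. fold Y.
  assert (1 < exp (l2 * (ln p2 - ln p1))).
  { rewrite <- exp_0. apply exp_increasing.
    assert (ln p1 < ln p2) by (apply ln_increasing; lra). nra. }
  nra. }
assert (hV2 : (l2 - l1) * V2 = (1 - l1) * K * p2 + l1 * er * a).
{ transitivity ((l1 * V1 + l2 * V2) - l1 * (V1 + V2)); [ring|]. rewrite hdV, hV. ring. }
assert (hlt : (1 - l1) * K * pO < (1 - l1) * K * p2) by (rewrite K_pO, hbk; nra).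
apply (Rmult_lt_reg_l ((1 - l1) * K)); [nra | lra].
Qed.

Lemma exit_smooth_fit_threshold_gt (a k p1 p2 B1 B2 : R) :
  0 < a -> 0 < k -> b = a + k -> 0 < p1 -> p1 < p2 ->
  B1 * Rpower p1 l1 + B2 * Rpower p1 l2 = er * k ->
  l1 * B1 * Rpower p1 (l1 - 1) + l2 * B2 * Rpower p1 (l2 - 1) = 0 ->
  B1 * Rpower p2 l1 + B2 * Rpower p2 l2 = A * Rpower p2 l1 + K * p2 - er * a ->
  l1 * B1 * Rpower p2 (l1 - 1) + l2 * B2 * Rpower p2 (l2 - 1) = l1 * A * Rpower p2 (l1 - 1) + K ->
  em * (r * a) < p2.
Proof.
intros ha hk hbk hp1 hp12 hval1 hder1 hval2 hder2.
destruct pO_pos_lt as [hpO0 _].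
pose proof K_pos as hK.
assert (her0 : 0 < er) by (rewrite her; apply Rmult_lt_0_compat; lra).
assert (hp2 : 0 < p2) by lra.
set (V1 := (B1 - A) * Rpower p2 l1).
set (V2 := B2 * Rpower p2 l2).
assert (hV : V1 + V2 = K * p2 - er * a) by (unfold V1, V2; lra).
assert (hdV : l1 * V1 + l2 * V2 = K * p2).
{ unfold V1, V2.
  transitivity (l1 * (B1 * Rpower p2 l1) + l2 * (B2 * Rpower p2 l2) - l1 * (A * Rpower p2 l1)); [ring|].
  rewrite <- Rpower_derivative_scale by exact hp2. rewrite hder2, <- (Rpower_pred_mul p2 l1 hp2).
  ring. }
pose proof (pO_lt_exit_threshold a k p1 p2 B1 B2 V1 hk hbk hp1 hp12 hval1 hder1 hV hdV) as hpO_p2.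
destruct (Rlt_or_le (em * (r * a)) p2) as [hgt | hle]; [exact hgt | exfalso].
set (u := ln pO - ln p2).
assert (hu : u < 0) by (unfold u; assert (ln pO < ln p2) by (apply ln_increasing; lra); lra).
assert (hwc : (1 - l1) * (l2 - 1) * (K * p2) <= - l1 * l2 * (er * a)).
{ replace (- l1 * l2 * (er * a)) with ((1 - l1) * (l2 - 1) * K * (em * (r * a)))
    by (rewrite K_threshold; ring).
  rewrite <- Rmult_assoc. apply Rmult_le_compat_l; [|exact hle].
  apply Rlt_le, Rmult_lt_0_compat; [apply Rmult_lt_0_compat|]; lra. }
pose proof (smooth_fit_gap_neg l1 l2 u (K * p2) (er * a) V1 V2 hl1 hl2 hu
  ltac:(nra) ltac:(nra) hwc hV hdV) as hgap.
assert (hcont : er * k <= B1 * Rpower pO l1 + B2 * Rpower pO l2)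
  by (apply (smooth_fit_lower_bound l1 l2 B1 B2 p1); try lra; nra).
assert (hshift : V1 * exp (l1 * u) + V2 * exp (l2 * u) - K * p2 * exp u + er * a
  = (B1 * Rpower pO l1 + B2 * Rpower pO l2) - (A * Rpower pO l1 + K * pO - er * a)).
{ unfold V1, V2, u. rewrite (Rpower_rebase pO p2 l1), (Rpower_rebase pO p2 l2).
  replace (exp (ln pO - ln p2)) with (pO / p2)
    by (unfold Rminus; rewrite exp_plus, exp_Ropp, !exp_ln by lra; field; lra).
  field. lra. }
pose proof exit_value_pO as hexit.
assert (er * b = er * a + er * k) by (rewrite hbk; ring).
lra.
Qed.

End Thresholds.

End Roots.

Theorem corollary5p6 (mu sigma r delta C KI KO : R)
  (Hsigma : 0 < sigma) (Hr : 0 < r) (Hdelta : 0 <= delta) (Hrmu : r > mu) :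
  let l1 := lam1 mu sigma r in
  let l2 := lam2 mu sigma r in
  let A := Acoef mu sigma r delta C KO in
  (* (a) *)
  (C - r * KO <= 0 -> C + r * KI > 0 ->
     let pI := exp (- mu * delta) * (l2 / (l2 - 1)) * (r - mu) * (C / r + KI) in
     pI > exp (- mu * delta) * (C + r * KI))
  /\
  (* (b) *)
  (C - r * KO > 0 -> C + r * KI > 0 -> KI + KO >= 0 ->
     let f := fun p : R =>
       A * (l2 - l1) * Rpower p l1
       + exp ((mu - r) * delta) / (r - mu) * (l2 - 1) * p
       - l2 * exp (- r * delta) * (C / r + KI) in
     forall pI : R,
       0 < pI -> f pI = 0 -> (forall p : R, 0 < p -> f p = 0 -> p <= pI) ->
       pI > exp (- mu * delta) * (C + r * KI))
  /\
  (* (c) *)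
  (C - r * KO > 0 -> C + r * KI > 0 -> KI + KO < 0 ->
     pO mu sigma r delta C KO < exp (- mu * delta) * (C + r * KI) ->
     forall p1 p2 : R,
       0 < p1 -> p1 < p2 -> p1 <= pO mu sigma r delta C KO ->
       (exists B1 B2 : R,
          B1 * Rpower p1 l1 + B2 * Rpower p1 l2 = - exp (- r * delta) * (KI + KO)
          /\ l1 * B1 * Rpower p1 (l1 - 1) + l2 * B2 * Rpower p1 (l2 - 1) = 0
          /\ B1 * Rpower p2 l1 + B2 * Rpower p2 l2
             = A * Rpower p2 l1 + exp ((mu - r) * delta) / (r - mu) * p2
               - exp (- r * delta) * (C / r + KI)
          /\ l1 * B1 * Rpower p2 (l1 - 1) + l2 * B2 * Rpower p2 (l2 - 1)
             = l1 * A * Rpower p2 (l1 - 1) + exp ((mu - r) * delta) / (r - mu)) ->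
       p1 < exp (- mu * delta) * (C - r * KO)
       /\ p2 > exp (- mu * delta) * (C + r * KI)).
Proof.
intros l1 l2 A.
destruct (lam_vieta mu sigma r Hsigma (Rlt_le _ _ Hr)) as [hr hmu].
set (s := sigma ^ 2 / 2) in hr, hmu.
assert (hs : 0 < s) by (unfold s; pose proof (pow_lt sigma 2 Hsigma); lra).
destruct (vieta_root_bounds s l1 l2 r mu hs Hr Hrmu hr hmu (lam1_le_lam2 mu sigma r Hsigma))
  as [hl1 hl2].
set (em := exp (- mu * delta)). set (E := exp ((mu - r) * delta)).
assert (hem : 0 < em) by apply exp_pos. assert (hE : 0 < E) by apply exp_pos.
assert (her : exp (- r * delta) = E * em) by (unfold E, em; rewrite <- exp_plus; f_equal; ring).
set (a := C / r + KI). set (b := C / r - KO).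
assert (hCa : C + r * KI = r * a) by (unfold a; field; lra).
assert (hCb : C - r * KO = r * b) by (unfold b; field; lra).
assert (hpos : forall x, 0 < r * x -> 0 < x) by (intros x hx; apply (Rmult_lt_reg_l r); lra).
split; [|split].
- intros _ hKI pI. rewrite hCa.
  exact (entry_threshold_gt s l1 l2 r mu hs hl2 hr hmu em a hem (hpos a ltac:(lra))).
- intros hKO hKI hsum f pI _ _ hmax. rewrite hCa.
  destruct (entry_root_above s l1 l2 r mu hs hl1 hl2 hr hmu em E (exp (- r * delta)) b
    (pO mu sigma r delta C KO) A hem hE her (hpos b ltac:(lra)) eq_refl eq_refl
    a (hpos a ltac:(lra)) ltac:(unfold a, b; lra)) as [z [hz hfz]].
  assert (0 < em * (r * a)) by (apply Rmult_lt_0_compat; lra).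
  pose proof (hmax z ltac:(lra) hfz). lra.
-
  intros hKO hKI hsum _ p1 p2 hp1 hp12 hp1O [B1 [B2 [hval1 [hder1 [hval2 hder2]]]]].
  rewrite hCa, hCb.
  assert (hb : 0 < b) by (apply hpos; lra).
  split.
  + destruct (pO_pos_lt s l1 l2 r mu hs hl1 hl2 hr hmu em b (pO mu sigma r delta C KO)
      hem hb eq_refl). lra.
  + apply (exit_smooth_fit_threshold_gt s l1 l2 r mu hs hl1 hl2 hr hmu em E (exp (- r * delta)) b
      (pO mu sigma r delta C KO) A hem hE her hb eq_refl eq_refl a (- (KI + KO)) p1 p2 B1 B2);
      try assumption; try lra.
    * apply hpos. lra.
    * unfold a, b. ring.
Qed.
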